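(* Let $n\ge4$ be even. For each $1\le i\le n-1$, $Y_i=\{z\in\mathcal F_n: z(1)=i+1\}$. Consequently $\mathcal F_n=Y_1\sqcup Y_2\sqcup\cdots\sqcup Y_{n-1}$.
   Context: $\mathcal F_m$ is the set of fixed-point-free involutions in $S_m$; $s_i=(i,i+1)$; permutations compose right to left and $z(i)$ is the image of $i$. Regard $\mathcal F_{n-2}\subset S_n$ (fixing $n-1,n$). With $w_0$ the longest element of $S_n$, $\rho(z)=w_0zs_{n-1}w_0$ for $z\in\mathcal F_{n-2}$, $Y_1=\rho(\mathcal F_{n-2})$, $\sigma_i=s_is_{i-1}\cdots s_1$, and $Y_i=\sigma_iY_1\sigma_i^{-1}$. *)

From mathcomp Require Import all_boot all_fingroup.
Set Implicit Arguments. Unset Strict Implicit. Unset Printing Implicit Defensive.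
Import GroupScope.

(* Conventions: the paper's points 1..n are the ordinals 0..n-1 of 'I_n
   (paper point k  <->  ordinal of value k-1).  Permutations compose right
   to left as in the paper: (comp x y) a = x (y a).  Note mathcomp's own
   group product is left-to-right: (x * y) a = y (x a). *)

Definition comp {n} (x y : 'S_n) : 'S_n := y * x.

(* The 1-indexed value z(k) (as a nat in 1..n); 0 if k is out of range. *)
Definition app {n} (z : 'S_n) (k : nat) : nat :=
  match (insub k.-1 : option 'I_n) with Some a => (z a).+1 | None => 0 end.

(* s_i = (i, i+1) (1-indexed), i.e. the transposition of ordinals i-1, i;
   identity if out of range. *)
Definition s (n i : nat) : 'S_n :=
  match (insub i.-1 : option 'I_n), (insub i : option 'I_n) with
  | Some a, Some b => tperm a b
  | _, _ => 1
  end.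

Definition w0 (n : nat) : 'S_n := perm (@rev_ord_inj n).

Definition fpf_inv (n : nat) : {set 'S_n} :=
  [set z : 'S_n | (z * z == 1) && [forall x, z x != x]].

(* F_{n-2} regarded inside S_n (fixing n-1 and n): involutions of S_n fixing
   the points n-1, n and having no other fixed point. *)
Definition fpf_inv_sub (n : nat) : {set 'S_n} :=
  [set z : 'S_n | (z * z == 1) &&
     [forall x : 'I_n, (z x == x) == (n - 2 <= val x)]].

Definition rho {n} (z : 'S_n) : 'S_n :=
  comp (w0 n) (comp (comp z (s n (n - 1))) (w0 n)).

Definition Y1 (n : nat) : {set 'S_n} := [set rho z | z in fpf_inv_sub n].

Fixpoint sigma (n i : nat) : 'S_n :=
  match i with 0 => 1 | i'.+1 => comp (s n i) (sigma n i') end.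

Definition Y (n i : nat) : {set 'S_n} :=
  [set comp (sigma n i) (comp y (sigma n i)^-1) | y in Y1 n].

From Pilot Require Import Defs.
From mathcomp Require Import all_boot all_fingroup zify.
Set Implicit Arguments. Unset Strict Implicit. Unset Printing Implicit Defensive.
Import GroupScope.

(* Multiplying by s_{n-1} = (n-1, n) turns an involution whose fixed points
   are exactly n-1 and n into a fixed-point-free involution pairing n-1 with
   n, and back; conjugating by w0 then shows that Y_1 is the set of z in F_n
   with z(1) = 2.  Conjugation by g maps {z in F_n | z(a) = b} onto
   {z in F_n | z(g a) = g b}, and sigma_i sends 1 to i+1 and 2 to 1, so
   Y_i = {z in F_n | z(i+1) = 1} = {z in F_n | z(1) = i+1}.  These sets
   partition F_n according to the value z(1) <> 1. *)

Lemma commute_involM (G : groupType) (u v : G) :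
  commute u v -> u * u = 1 -> v * v = 1 -> (u * v) * (u * v) = 1.
Proof. by move=> cuv uu vv; rewrite -mulgA (mulgA v) -cuv -mulgA vv mulg1 uu. Qed.

Lemma commute_tperm (T : finType) (p q : T) (x : {perm T}) :
  tperm (x p) (x q) = tperm p q -> commute (tperm p q) x.
Proof. by move=> e; rewrite /commute conjgC tpermJ e. Qed.

Lemma compE n (x y : 'S_n) a : Defs.comp x y a = x (y a).
Proof. by rewrite /Defs.comp permM. Qed.

Section FixedPointFreeInvolutions.

Variable n : nat.
Implicit Types (x z g : 'S_n) (a b p q : 'I_n).

Definition fpf_pairing a b : {set 'S_n} := [set z in fpf_inv n | z a == b].

Definition involutions_fixing p q : {set 'S_n} :=
  [set z : 'S_n | (z * z == 1) && [forall a, (z a == a) == (a \in [set p; q])]].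

Lemma fpf_invP z : reflect (z * z = 1 /\ forall a, z a != a) (z \in fpf_inv n).
Proof.
rewrite inE; apply: (iffP andP) => [[/eqP zz /forallP fz] | [zz fz]] //.
by split; [apply/eqP | apply/forallP].
Qed.

Lemma fpf_pairingE a b z :
  (z \in fpf_pairing a b) = (z \in fpf_inv n) && (z a == b).
Proof. by rewrite inE. Qed.

Lemma fpf_invJ z g : (z ^ g \in fpf_inv n) = (z \in fpf_inv n).
Proof.
suff fpfJ y h : y \in fpf_inv n -> y ^ h \in fpf_inv n.
  by apply/idP/idP => [/(fpfJ _ g^-1)|/fpfJ]; rewrite ?conjgK.
case/fpf_invP => yy fy; apply/fpf_invP; split => [|a].
  by rewrite -conjMg yy conj1g.
by rewrite -(permKV h a) permJ (inj_eq perm_inj).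
Qed.

Lemma fpf_pairingJ a b g : fpf_pairing a b :^ g = fpf_pairing (g a) (g b).
Proof.
apply/setP => z; rewrite mem_conjg !fpf_pairingE fpf_invJ conjgE invgK !permM.
by rewrite (canF_eq (permKV g)).
Qed.

Lemma fpf_pairingC a b : fpf_pairing a b = fpf_pairing b a.
Proof.
apply/setP => z; rewrite !fpf_pairingE; apply: andb_id2l => /fpf_invP[zz _].
by apply/eqP/eqP => <-; rewrite -permM zz perm1.
Qed.

Lemma tperm_involutions_fixing p q : p != q ->
  [set tperm p q * z | z in involutions_fixing p q] = fpf_pairing q p.
Proof.
move=> npq; apply/setP => x; rewrite fpf_pairingE.
apply/imsetP/andP => [[z] | [/fpf_invP[xx fx] /eqP xq]].
- rewrite inE => /andP[/eqP zz /forallP fz] ->{x}.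
  have zfix a : (z a == a) = (a \in [set p; q]) := eqP (fz a).
  have zp : z p = p by apply/eqP; rewrite zfix set21.
  have zq : z q = q by apply/eqP; rewrite zfix set22.
  have ctz : commute (tperm p q) z by apply: commute_tperm; rewrite zp zq.
  split; last by rewrite permM tpermR zp.
  apply/fpf_invP; split => [|a]; first exact: commute_involM ctz (tperm2 p q) zz.
  rewrite permM; case: tpermP => [->|->|ap aq].
  + by rewrite zq eq_sym.
  + by rewrite zp.
  + by rewrite zfix !inE; apply/norP; split; apply/eqP.
- have xp : x p = q by rewrite -xq -permM xx perm1.
  have ctx : commute (tperm p q) x by apply: commute_tperm; rewrite xp xq tpermC.
  exists (tperm p q * x); last by rewrite mulgA tperm2 mul1g.
  rewrite inE (commute_involM ctx (tperm2 p q) xx) eqxx; apply/forallP => a.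
  rewrite permM !inE; case: tpermP => [->|->|ap aq].
  + by rewrite xq !eqxx.
  + by rewrite xp !eqxx orbT.
  + rewrite (negbTE (fx a)) eq_sym eqbF_neg.
    by apply/norP; split; apply/eqP.
Qed.

Lemma fpf_inv_subE p q :
  p = n - 2 :> nat -> q = n - 1 :> nat -> fpf_inv_sub n = involutions_fixing p q.
Proof.
move=> vp vq; apply/setP => z; rewrite !inE; congr (_ && _).
apply: eq_forallb => a; rewrite !inE -!val_eqE /= vp vq; congr (_ == _).
by have a_lt := ltn_ord a; apply/idP/orP; lia.
Qed.

Lemma w0_val a : w0 n a = n - a.+1 :> nat.
Proof. by rewrite permE. Qed.

Lemma w0K : involutive (w0 n).
Proof. by move=> a; apply: ord_inj; rewrite !w0_val; have := ltn_ord a; lia. Qed.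

Lemma w0V : (w0 n)^-1 = w0 n.
Proof. by apply/eqP; rewrite eq_invg_mul; apply/eqP/permP => a; rewrite permM w0K perm1. Qed.

Lemma s_tperm i a b : a = i.-1 :> nat -> b = i :> nat -> s n i = tperm a b.
Proof. by move=> va vb; rewrite /s -va -vb !valK. Qed.

Lemma rhoE z : rho z = (s n (n - 1) * z) ^ w0 n.
Proof. by rewrite /rho /Defs.comp conjgE w0V !mulgA. Qed.

Lemma Y1E a0 a1 : a0 = 0 :> nat -> a1 = 1%N :> nat -> Y1 n = fpf_pairing a0 a1.
Proof.
move=> v0 v1; set p := w0 n a1; set q := w0 n a0.
have vp : p = n - 2 :> nat by rewrite w0_val v1.
have vq : q = n - 1 :> nat by rewrite w0_val v0.
have npq : p != q by rewrite -val_eqE /= vp vq; have := ltn_ord a1; lia.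
have sE : s n (n - 1) = tperm p q by apply: s_tperm vq; rewrite vp; lia.
transitivity ([set tperm p q * z | z in fpf_inv_sub n] :^ w0 n).
  by rewrite /conjugate -imset_comp; apply: eq_imset => z; rewrite rhoE sE.
by rewrite (fpf_inv_subE vp vq) tperm_involutions_fixing // fpf_pairingJ !w0K.
Qed.

Lemma sigmaS i : sigma n i.+1 = Defs.comp (s n i.+1) (sigma n i).
Proof. by []. Qed.

Lemma sigma_val0 i a b : a = 0 :> nat -> b = i :> nat -> sigma n i a = b.
Proof.
move=> va; elim: i b => [|i IH] b vb; first by rewrite perm1; apply: ord_inj; rewrite va vb.
have i_lt : i < n by have := ltn_ord b; rewrite vb; lia.
rewrite sigmaS compE (IH (Ordinal i_lt)) //.
by rewrite (@s_tperm i.+1 (Ordinal i_lt) b) ?tpermL.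
Qed.

Lemma sigma_val1 i a b : a = 1%N :> nat -> b = 0 :> nat -> 0 < i < n -> sigma n i a = b.
Proof.
move=> va vb; elim: i => [|[|i] IH] // /andP[_ i_lt].
  by rewrite sigmaS compE perm1 (@s_tperm 1 b a) ?tpermR.
have i_lt' : i.+1 < n by lia.
rewrite sigmaS compE IH ?i_lt' // (@s_tperm i.+2 (Ordinal i_lt') (Ordinal i_lt)) //.
by rewrite tpermD // -val_eqE /= vb.
Qed.

Lemma YE i a0 : a0 = 0 :> nat -> 0 < i < n -> Y n i = [set z in fpf_inv n | z a0 == i :> nat].
Proof.
move=> v0 /andP[i_gt0 i_lt]; have one_lt : 1 < n by lia.
set a1 := Ordinal one_lt; set c := Ordinal i_lt.
have -> : Y n i = Y1 n :^ sigma n i.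
  by apply: eq_imset => y; rewrite /Defs.comp conjgE mulgA.
rewrite (@Y1E a0 a1) // fpf_pairingJ.
rewrite (@sigma_val0 i a0 c) // (@sigma_val1 i a1 a0) ?i_gt0 // fpf_pairingC.
by apply/setP => z; rewrite fpf_pairingE inE.
Qed.

End FixedPointFreeInvolutions.

Lemma appE n (z : 'S_n) (a0 : 'I_n) : a0 = 0 :> nat -> app z 1 = (z a0).+1.
Proof. by move=> v0; rewrite /app /= -v0 valK. Qed.

Theorem theorem3p3 (n : nat) (hn : 4 <= n) (heven : ~~ odd n) :
  (forall i, 1 <= i <= n - 1 ->
     Y n i = [set z in fpf_inv n | app z 1 == i.+1]) /\
  fpf_inv n = \bigcup_(1 <= i < n) Y n i /\
  (forall i j, 1 <= i <= n - 1 -> 1 <= j <= n - 1 -> i != j ->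
     [disjoint Y n i & Y n j]).
Proof.
have n_gt0 : 0 < n by lia.
pose a0 := Ordinal n_gt0; have v0 : a0 = 0 :> nat by [].
have Yi i : 1 <= i <= n - 1 -> Y n i = [set z in fpf_inv n | z a0 == i :> nat].
  by move=> i_range; apply: YE => //; lia.
split; [|split].
- by move=> i /Yi ->; apply/setP => z; rewrite !inE (appE z v0) eqSS.
- apply/setP => z; rewrite big_geq_mkord; apply/idP/bigcupP => [zF | [i /= i_gt0]].
    have /fpf_invP[_ /(_ a0)] := zF; rewrite -val_eqE /= -lt0n => za0_gt0.
    have za0_lt := ltn_ord (z a0).
    by exists (z a0); rewrite // Yi; [rewrite inE zF eqxx | lia].
  have i_lt := ltn_ord i.
  by rewrite Yi; [rewrite inE => /andP[] | lia].
move=> i j /Yi-> /Yi-> ij; apply/pred0P => z /=; apply/negP.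
by rewrite !inE => /andP[/andP[_ /eqP->] /andP[_]]; apply/negP.
Qed.
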